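(* Let $\mathcal{E}=\langle\mathrm{Env},A,\Rightarrow\rangle$ be an environment LTS and $\mathcal{P}=\langle\mathrm{Pr},A,\to\rangle$ a process LTS such that $\mathcal{P}$ contains a universal process, contains $\mathcal{E}$ (i.e. $\mathrm{Env}\subseteq\mathrm{Pr}$ with the same transitions), and is closed under joins. Then for all environments $e,f\in\mathrm{Env}$ (not necessarily image-finite): (1) $e\le f \iff\ \le^{ji}_f\ \subseteq\ \le^{ji}_e$; (2) $e\le f \iff\ \ge^{ji}_f\ \subseteq\ \ge^{ji}_e$, where $\ge^{ji}_g$ is the converse of $\le^{ji}_g$; (3) $e\le f \iff\ \simeq^{ji}_f\ \subseteq\ \simeq^{ji}_e$.
   Context: A labeled transition system (LTS) is a triple $\langle \mathrm{St},A,\to\rangle$ with states, actions, and transitions $s\xrightarrow{a}t$. A process LTS $\mathcal{P}=\langle \mathrm{Pr},A,\to\rangle$ has states called processes; an environment LTS $\mathcal{E}=\langle\mathrm{Env},A,\Rightarrow\rangle$ has states called environments, transitions $e\xRightarrow{a}e'$. A simulation is a nonempty relation $S$ on states such that $s\,S\,t$ and $s\xrightarrow{a}s'$ imply some $t\xrightarrow{a}t'$ with $s'\,S\,t'$; $s\le t$ iff some simulation relates $s$ to $t$; a bisimulation is a relation $B$ with $B$ and its converse simulations, and $\sim$ is bisimilarity. A process $u\in\mathrm{Pr}$ is universal if for every $a\in A$ there is a transition $u\xrightarrow{a}u'$ with $u'\sim u$. $\mathcal{P}$ is closed under joins if for all $s_1,s_2\in\mathrm{Pr}$ there is $s_1\mathbin{\&}s_2\in\mathrm{Pr}$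 whose transitions are exactly $s_1\mathbin{\&}s_2\xrightarrow{a}s_1'\mathbin{\&}s_2'$ for $s_1\xrightarrow{a}s_1'$, $s_2\xrightarrow{a}s_2'$. The join LTS $\mathcal{P}\mathbin{\&}\mathcal{E}$ has states $p\mathbin{\&}e$ and transitions $p\mathbin{\&}e\xrightarrow{a}p'\mathbin{\&}e'$ iff $p\xrightarrow{a}p'$ and $e\xRightarrow{a}e'$. $p\le^{ji}_e q$ iff $p\mathbin{\&}e\le q\mathbin{\&}e$; $p\simeq^{ji}_e q$ iff $p\le^{ji}_e q$ and $q\le^{ji}_e p$. *)

Definition is_simulation {St A : Type} (step : St -> A -> St -> Prop)
  (R : St -> St -> Prop) : Prop :=
  (exists s t, R s t) /\
  forall s t a s', R s t -> step s a s' -> exists t', step t a t' /\ R s' t'.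

Definition simulated {St A : Type} (step : St -> A -> St -> Prop) (s t : St) : Prop :=
  exists R, is_simulation step R /\ R s t.

Definition bisimilar {St A : Type} (step : St -> A -> St -> Prop) (s t : St) : Prop :=
  exists B, is_simulation step B /\ is_simulation step (fun x y => B y x) /\ B s t.

Definition universal {Pr A : Type} (pstep : Pr -> A -> Pr -> Prop) (u : Pr) : Prop :=
  forall a, exists u', pstep u a u' /\ bisimilar pstep u' u.

(* The process LTS contains the environment LTS: Env is (via the injective
   embedding emb) a subset of Pr with exactly the same transitions. *)
Definition contains_env {Pr Env A : Type} (pstep : Pr -> A -> Pr -> Prop)
  (estep : Env -> A -> Env -> Prop) (emb : Env -> Pr) : Prop :=
  (forall e1 e2, emb e1 = emb e2 -> e1 = e2) /\
  (forall e a e', estep e a e' <-> pstep (emb e) a (emb e')) /\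
  (forall e a p', pstep (emb e) a p' -> exists e', p' = emb e').

Definition join_op {Pr A : Type} (pstep : Pr -> A -> Pr -> Prop)
  (jn : Pr -> Pr -> Pr) : Prop :=
  forall s1 s2 a t, pstep (jn s1 s2) a t <->
    exists s1' s2', pstep s1 a s1' /\ pstep s2 a s2' /\ t = jn s1' s2'.

Definition closed_under_joins {Pr A : Type} (pstep : Pr -> A -> Pr -> Prop) : Prop :=
  exists jn, join_op pstep jn.

(* The join LTS P & E, with states the pairs (p, e) written p & e. *)
Definition join_step {Pr Env A : Type} (pstep : Pr -> A -> Pr -> Prop)
  (estep : Env -> A -> Env -> Prop) (x : Pr * Env) (a : A) (y : Pr * Env) : Prop :=
  pstep (fst x) a (fst y) /\ estep (snd x) a (snd y).

Definition le_ji {Pr Env A : Type} (pstep : Pr -> A -> Pr -> Prop)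
  (estep : Env -> A -> Env -> Prop) (e : Env) (p q : Pr) : Prop :=
  simulated (join_step pstep estep) (p, e) (q, e).

Definition ge_ji {Pr Env A : Type} (pstep : Pr -> A -> Pr -> Prop)
  (estep : Env -> A -> Env -> Prop) (e : Env) (p q : Pr) : Prop :=
  le_ji pstep estep e q p.

Definition eq_ji {Pr Env A : Type} (pstep : Pr -> A -> Pr -> Prop)
  (estep : Env -> A -> Env -> Prop) (e : Env) (p q : Pr) : Prop :=
  le_ji pstep estep e p q /\ le_ji pstep estep e q p.

Definition rel_incl {X : Type} (R S : X -> X -> Prop) : Prop :=
  forall x y, R x y -> S x y.

From Corelib Require Import ssreflect ssrfun ssrbool.

Set Implicit Arguments.
Unset Strict Implicit.

(* The joined process p & e behaves like p restricted to the moves that e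
   permits, so [p <=^ji_e q] amounts to [p & e <= q].  Joining is monotone,
   hence e <= f gives p & e <= p & f and [<=^ji_f] is contained in [<=^ji_e].
   Conversely, joining with the universal process u changes nothing up to
   simulation, so u <=^ji_f f (as u & f <= f) and f <=^ji_f u (as u is
   greatest); the inclusion for e then yields e <= u & e <= f. *)

Section Simulation.
Variables (St A : Type) (step : St -> A -> St -> Prop).

Lemma simulated_intro (R : St -> St -> Prop) s t :
  R s t ->
  (forall s t a s', R s t -> step s a s' -> exists t', step t a t' /\ R s' t') ->
  simulated step s t.
Proof. by move=> Rst HR; exists R; split=> //; split=> //; exists s, t. Qed.
Arguments simulated_intro R {s t}.

Lemma simulated_step s t a s' :
  simulated step s t -> step s a s' -> exists t', step t a t' /\ simulated step s' t'.
Proof.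
move=> [R [RS Rst]]; case: (RS) => _ HR /(HR _ _ _ _ Rst) [t' [Ht' Rs't']].
by exists t'; split=> //; exists R.
Qed.

Lemma simulated_refl s : simulated step s s.
Proof. by apply: (simulated_intro eq) => // x t a x' -> Hx; exists x'. Qed.

Lemma simulated_trans s t r :
  simulated step s t -> simulated step t r -> simulated step s r.
Proof.
move=> Hst Htr.
apply: (simulated_intro (fun x z => exists y, simulated step x y /\ simulated step y z));
  first by exists t.
move=> x z a x' [y [Hxy Hyz]] /(simulated_step Hxy) [y' [/(simulated_step Hyz) [z' [Hz Hy'z']] Hx'y']].
by exists z'; split=> //; exists y'.
Qed.

Lemma bisimilar_simulated_sym s t : bisimilar step s t -> simulated step t s.
Proof. by move=> [B [_ [HBc Bst]]]; exists (fun x y => B y x). Qed.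

Lemma universal_simulated_step u a :
  universal step u -> exists u', step u a u' /\ simulated step u u'.
Proof.
by move=> /(_ a) [u' [Hu' /bisimilar_simulated_sym Huu']]; exists u'.
Qed.

Lemma simulated_universal u s : universal step u -> simulated step s u.
Proof.
move=> Hu; apply: (simulated_intro (fun _ t => simulated step u t)).
  exact: simulated_refl.
move=> _ t a _ Hut _; have [u' [Hu' Huu']] := universal_simulated_step a Hu.
have [t' [Ht' Hu't']] := simulated_step Hut Hu'.
by exists t'; split=> //; apply: simulated_trans Hu't'.
Qed.

End Simulation.

Arguments simulated_intro {St A step} R {s t}.
Arguments simulated_refl {St A step} s.

Section Joins.
Variables (Pr A : Type) (pstep : Pr -> A -> Pr -> Prop) (jn : Pr -> Pr -> Pr).
Hypothesis Hjn : join_op pstep jn.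

Lemma join_stepP x y a t :
  pstep (jn x y) a t <-> exists x' y', pstep x a x' /\ pstep y a y' /\ t = jn x' y'.
Proof. exact: Hjn. Qed.

Lemma join_step_intro x y a x' y' :
  pstep x a x' -> pstep y a y' -> pstep (jn x y) a (jn x' y').
Proof. by move=> Hx Hy; apply/join_stepP; exists x', y'. Qed.

Lemma join_simulated_r x y : simulated pstep (jn x y) y.
Proof.
apply: (simulated_intro (fun s t => exists x, s = jn x t)); first by exists x.
move=> _ t a _ [x0 ->] /join_stepP [x' [t' [_ [Ht' ->]]]].
by exists t'; split=> //; exists x'.
Qed.

Lemma join_simulated x x' y y' :
  simulated pstep x x' -> simulated pstep y y' -> simulated pstep (jn x y) (jn x' y').
Proof.
move=> Hx Hy.
apply: (simulated_intro (fun s t => exists x x' y y', s = jn x y /\ t = jn x' y' /\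
          simulated pstep x x' /\ simulated pstep y y')); first by exists x, x', y, y'.
move=> _ _ a _ [x0 [x0' [y0 [y0' [-> [-> [Hx0 Hy0]]]]]]] /join_stepP [x1 [y1 [Hx1 [Hy1 ->]]]].
have [x1' [Hx1' Hx1x1']] := simulated_step Hx0 Hx1.
have [y1' [Hy1' Hy1y1']] := simulated_step Hy0 Hy1.
by exists (jn x1' y1'); split; [apply: join_step_intro | exists x1, x1', y1, y1'].
Qed.

Lemma simulated_join_universal u x : universal pstep u -> simulated pstep x (jn u x).
Proof.
move=> Hu.
apply: (simulated_intro (fun s t => exists u', t = jn u' s /\ simulated pstep u u'));
  first by exists u; split=> //; apply: simulated_refl.
move=> s _ a s' [u' [-> Huu']] Hs; have [u1 [Hu1 Huu1]] := universal_simulated_step a Hu.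
have [u1' [Hu1' Hu1u1']] := simulated_step Huu' Hu1.
exists (jn u1' s'); split; first exact: join_step_intro.
by exists u1'; split=> //; apply: simulated_trans Hu1u1'.
Qed.

Variables (Env : Type) (estep : Env -> A -> Env -> Prop) (emb : Env -> Pr).
Hypothesis Henv : contains_env pstep estep emb.

Lemma emb_stepP e a e' : estep e a e' <-> pstep (emb e) a (emb e').
Proof. by case: Henv => _ []. Qed.

Lemma emb_step_inv e a p' : pstep (emb e) a p' -> exists e', p' = emb e'.
Proof. by case: Henv => _ [_]; apply. Qed.

Lemma simulated_emb e f : simulated pstep (emb e) (emb f) <-> simulated estep e f.
Proof.
split=> H.
  apply: (simulated_intro (fun x y => simulated pstep (emb x) (emb y)) H).
  move=> x y a x' Hxy /emb_stepP /(simulated_step Hxy) [t' [Ht' Hx't']].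
  have [y' Ey'] := emb_step_inv Ht'; subst t'.
  by exists y'; split=> //; apply/emb_stepP.
apply: (simulated_intro (fun s t => exists x y, s = emb x /\ t = emb y /\
          simulated estep x y)); first by exists e, f.
move=> _ _ a s' [x [y [-> [-> Hxy]]]] Hs.
have [x' Ex'] := emb_step_inv Hs; subst s'.
have [y' [/emb_stepP Hy' Hx'y']] := simulated_step Hxy (proj2 (emb_stepP _ _ _) Hs).
by exists (emb y'); split=> //; exists x', y'.
Qed.

Lemma le_jiP e p q : le_ji pstep estep e p q <-> simulated pstep (jn p (emb e)) q.
Proof.
split=> H.
  apply: (simulated_intro (fun s t => exists p e1 e2, s = jn p (emb e1) /\
            simulated (join_step pstep estep) (p, e1) (t, e2))); first by exists p, e, e.
  move=> _ q0 a _ [p0 [e1 [e2 [-> Hpq]]]] /join_stepP [p1 [s1 [Hp1 [He1 ->]]]].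
  have [e1' Ee1'] := emb_step_inv He1; subst s1.
  have Hj : join_step pstep estep (p0, e1) a (p1, e1') by split=> //; apply/emb_stepP.
  have [[q1 e2'] [[Hq1 _] Hpq1]] := simulated_step Hpq Hj.
  by exists q1; split=> //; exists p1, e1', e2'.
rewrite /le_ji; apply: (simulated_intro (fun x y => snd x = snd y /\
          simulated pstep (jn (fst x) (emb (snd x))) (fst y))); first by [].
move=> [x e1] [y _] a [x' e1'] /= [<- Hxy] [/= Hx' He1'].
have /(join_step_intro Hx') Hj : pstep (emb e1) a (emb e1') by apply/emb_stepP.
by have [y' [Hy' Hx'y']] := simulated_step Hxy Hj; exists (y', e1').
Qed.

End Joins.

Theorem theorem3p14 (A Pr Env : Type)
  (pstep : Pr -> A -> Pr -> Prop) (estep : Env -> A -> Env -> Prop)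
  (emb : Env -> Pr)
  (Huniv : exists u : Pr, universal pstep u)
  (Hcont : contains_env pstep estep emb)
  (Hjoin : closed_under_joins pstep) :
  forall e f : Env,
    (simulated estep e f <-> rel_incl (le_ji pstep estep f) (le_ji pstep estep e)) /\
    (simulated estep e f <-> rel_incl (ge_ji pstep estep f) (ge_ji pstep estep e)) /\
    (simulated estep e f <-> rel_incl (eq_ji pstep estep f) (eq_ji pstep estep e)).
Proof.
move: Huniv Hjoin => [u Hu] [jn Hjn] e f.
have le_jiP := le_jiP Hjn Hcont.
have le_ji_antitone : simulated estep e f -> rel_incl (le_ji pstep estep f) (le_ji pstep estep e).
  move=> /(simulated_emb Hcont) Hef p q /le_jiP Hpq; apply/le_jiP.
  exact: simulated_trans (join_simulated Hjn (simulated_refl p) Hef) Hpq.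
have u_le_f : le_ji pstep estep f u (emb f) by apply/le_jiP; apply: join_simulated_r.
have f_le_u : le_ji pstep estep f (emb f) u by apply/le_jiP; apply: simulated_universal.
have le_ji_reflect : le_ji pstep estep e u (emb f) -> simulated estep e f.
  move=> /le_jiP Huef; apply/(simulated_emb Hcont).
  exact: simulated_trans (simulated_join_universal Hjn _ Hu) Huef.
split; [|split]; split.
- exact: le_ji_antitone.
- by move=> H; apply/le_ji_reflect/H.
- by move=> Hef p q; apply: le_ji_antitone.
- by move=> H; apply/le_ji_reflect/H.
- by move=> Hef p q [Hpq Hqp]; split; apply: le_ji_antitone.
- by move=> H; apply/le_ji_reflect; case: (H _ _ (conj u_le_f f_le_u)).
Qed.
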